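(* Let $A$ be a finite-dimensional complex evolution algebra which is not a non-zero trivial evolution algebra, with natural basis $B=\{e_1,\dots,e_n\}$ and structure matrix $W=(\omega_{ij})_{i,j=1}^n$ (so $e_j^2=\sum_i\omega_{ij}e_i$). Let $a=\sum_{i=1}^n\alpha_ie_i$, $D_a=\mathrm{diag}(\alpha_1,\dots,\alpha_n)$ and $\lambda\in\mathbb{C}$. Then: (i) $\lambda\in\sigma_m^A(a)$ if and only if $\lambda=0$ or $\lambda$ is an eigenvalue of the matrix $WD_a$; (ii) $\lambda\in\sigma^A(a)$ if and only if $\lambda=0$ or the linear system $(WD_a-\lambda I_n)\beta=(\alpha_1,\dots,\alpha_n)^T$ has no solution $\beta\in\mathbb{C}^n$ (in which case $\lambda\in\sigma^A_m(a)$).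
   Context: An evolution algebra is an algebra with a basis $\{e_i\}$ (natural basis) with $e_ie_j=0$ for $i\neq j$; a non-zero trivial evolution algebra has a natural basis with $e_i^2=\omega_{ii}e_i$, $\omega_{ii}\neq0$ for all $i$. For a complex algebra $A$: if $A$ has a unit $e$ put $\tilde A=A$, else $\tilde A=A\oplus\mathbb{C}\mathbf1$ is the unitization with product $(a+\lambda\mathbf1)(b+\mu\mathbf1)=ab+\lambda b+\mu a+\lambda\mu\mathbf1$ and $e=\mathbf1$. $x\in\tilde A$ is invertible if it has a left and a right inverse, and m-invertible if $L_x(y)=xy$ and $R_x(y)=yx$ are bijective on $\tilde A$. $\sigma^A(a)=\{\lambda:a-\lambda e\text{ not invertible in }\tilde A\}$ and $\sigma^A_m(a)=\{\lambda:a-\lambda e\text{ not m-invertible in }\tilde A\}$. *)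

From HB Require Import structures.
From mathcomp Require Import all_boot all_order all_algebra.
Set Implicit Arguments. Unset Strict Implicit. Unset Printing Implicit Defensive.
Import GRing.Theory Num.Theory.
Local Open Scope ring_scope.

(* The evolution algebra A = F^n (column vectors = coordinates w.r.t. the
   natural basis e_1..e_n), structure matrix W: e_j^2 = sum_i W i j e_i,
   e_i e_j = 0 for i <> j. *)
Definition evmul (F : fieldType) (n : nat) (W : 'M[F]_n) (x y : 'cV[F]_n)
  : 'cV[F]_n := \col_i \sum_j W i j * x j 0 * y j 0.

Definition nonzero_trivial (F : fieldType) (n : nat) (W : 'M[F]_n) : Prop :=
  (0 < n)%N /\
  exists P : 'M[F]_n, P \in unitmx /\
    (forall k l : 'I_n, k != l -> evmul W (col k P) (col l P) = 0) /\
    (forall k : 'I_n, exists c : F, c != 0 /\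
        evmul W (col k P) (col k P) = c *: col k P).

Definition is_unit_of (T : Type) (mul : T -> T -> T) (e : T) : Prop :=
  forall x, mul e x = x /\ mul x e = x.

Definition invertible (T : Type) (mul : T -> T -> T) (e x : T) : Prop :=
  (exists y, mul x y = e) /\ (exists z, mul z x = e).

Definition m_invertible (T : Type) (mul : T -> T -> T) (e x : T) : Prop :=
  bijective (mul x) /\ bijective (fun y => mul y x).

(* unitization A (+) F 1 : (a + l 1)(b + m 1) = ab + l b + m a + l m 1 *)
Definition umul (F : fieldType) (n : nat) (W : 'M[F]_n)
  (x y : 'cV[F]_n * F) : 'cV[F]_n * F :=
  (evmul W x.1 y.1 + x.2 *: y.1 + y.2 *: x.1, x.2 * y.2).

(* spectrum w.r.t. an invertibility notion P:
   if A has a unit e, tilde A = A and lam is in the spectrum iff a - lam e is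
   not P-invertible in A; otherwise tilde A is the unitization, e = 1 = (0,1),
   and a - lam 1 = (a, -lam). *)
Definition spec_gen
  (P : forall T : Type, (T -> T -> T) -> T -> T -> Prop)
  (F : fieldType) (n : nat) (W : 'M[F]_n) (a : 'cV[F]_n) (lam : F) : Prop :=
  (exists e, is_unit_of (@evmul F n W) e /\
             ~ P _ (@evmul F n W) e (a - lam *: e)) \/
  ((~ exists e, is_unit_of (@evmul F n W) e) /\
   ~ P _ (@umul F n W) (0, 1) (a, - lam)).

Definition sigmaA (F : fieldType) (n : nat) (W : 'M[F]_n) a lam :=
  spec_gen invertible W a lam.
Definition sigmaA_m (F : fieldType) (n : nat) (W : 'M[F]_n) a lam :=
  spec_gen m_invertible W a lam.

From HB Require Import structures.
From mathcomp Require Import all_boot all_order all_algebra.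
From Corelib Require Import Setoid.
Set Implicit Arguments. Unset Strict Implicit. Unset Printing Implicit Defensive.
Import GRing.Theory Num.Theory.
Local Open Scope ring_scope.

(* A unit e of a nonzero evolution algebra satisfies W i j * e_j = delta_ij, so
   W is diagonal with nonzero diagonal and the natural basis itself is trivial.
   Hence A has no unit, and both spectra live in the unitization.  There,
   multiplication by a - lam 1 is (b, mu) |-> (M b + mu a, - lam mu) with
   M = W D_a - lam I; it has an inverse iff lam <> 0 and a lies in the range of
   M, and is bijective iff lam <> 0 and M is invertible. *)

Lemma eigenvalue_unitmx (F : fieldType) n (G : 'M[F]_n) lam :
  eigenvalue G lam = (G - lam%:M \notin unitmx).
Proof. by rewrite /eigenvalue /eigenspace kermx_eq0 row_free_unit. Qed.

Section CommutativeProduct.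
Variables (T : Type) (mul : T -> T -> T) (e : T).
Hypothesis mulC : commutative mul.

Lemma invertible_comm x : invertible mul e x <-> exists y, mul x y = e.
Proof.
split=> [[inv _] // | [y xy]]; split; first by exists y.
by exists y; rewrite mulC.
Qed.

Lemma m_invertible_comm x : m_invertible mul e x <-> bijective (mul x).
Proof.
split=> [[bij _] // | bij]; split=> //.
exact: (eq_bij (g := mul^~ x) bij (mulC x)).
Qed.

End CommutativeProduct.

Section EvolutionAlgebra.
Variables (F : fieldType) (n : nat) (W : 'M[F]_n).

Lemma evmulC : commutative (evmul W).
Proof.
by move=> x y; apply/matrixP=> i j; rewrite !mxE; apply: eq_bigr=> k _; rewrite mulrAC.
Qed.

Lemma evmul_diag_mx x y : evmul W x y = W *m diag_mx x^T *m y.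
Proof.
apply/matrixP=> i j; rewrite !mxE ord1; apply: eq_bigr=> k _.
by rewrite mul_mx_diag !mxE.
Qed.

Lemma evmul_unit_coef e : is_unit_of (evmul W) e ->
  forall i j, W i j * e j 0 = (i == j)%:R.
Proof.
move=> unit_e i j; have [/matrixP /(_ i 0) + _] := unit_e (delta_mx j 0).
rewrite !mxE (bigD1 j) //= big1 ?addr0; last first.
  by move=> k /negbTE kj; rewrite !mxE kj mulr0.
by rewrite !mxE !eqxx mulr1 andbT.
Qed.

Lemma evmul_unit_nonzero_trivial e :
  (0 < n)%N -> is_unit_of (evmul W) e -> nonzero_trivial W.
Proof.
move=> n_gt0 /evmul_unit_coef coef; split=> //.
have Wdiag i j : i != j -> W i j = 0.
  move=> ij; have /eqP := coef i j; rewrite (negbTE ij) mulf_eq0 => /orP[/eqP //|].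
  by move=> /eqP ej0; have /eqP := coef j j; rewrite ej0 mulr0 eqxx eq_sym oner_eq0.
have Wii i : W i i != 0.
  by apply/eqP=> Wi0; have /eqP := coef i i; rewrite Wi0 mul0r eqxx eq_sym oner_eq0.
exists 1%:M; split; first exact: unitmx1.
split=> [k l kl | k].
  apply/matrixP=> i j; rewrite !mxE big1 // => m _; rewrite !col1 !mxE.
  by case: (m =P k) => [->|_]; rewrite ?(negbTE kl) ?mulr0 ?mul0r.
exists (W k k); split; first exact: Wii.
apply/matrixP=> i j.
rewrite !col1 !mxE (bigD1 k) //= big1 ?addr0; last first.
  by move=> m /negbTE mk; rewrite !mxE mk mulr0.
rewrite !mxE !eqxx !mulr1 ord1 eqxx andbT.
by have [->|ik] := eqVneq i k; rewrite ?mulr1 // mulr0 Wdiag.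
Qed.

Lemma umulC : commutative (umul W).
Proof.
move=> x y; rewrite /umul evmulC mulrC.
by congr (_, _); rewrite addrAC -addrA [_ + _ *: _]addrC addrA.
Qed.

Variables (a : 'cV[F]_n) (lam : F).
Let M := W *m diag_mx a^T - lam%:M.

Lemma umul_shift y : umul W (a, - lam) y = (M *m y.1 + y.2 *: a, - lam * y.2).
Proof.
rewrite /umul /= evmul_diag_mx /M mulmxBl mul_scalar_mx scaleNr.
by congr (_, _); rewrite addrAC.
Qed.

Lemma umul_shift_invertible :
  invertible (umul W) (0, 1) (a, - lam) <-> lam != 0 /\ exists beta, M *m beta = a.
Proof.
rewrite (invertible_comm _ umulC).
split=> [[[b mu]] | [lam_neq0 [beta Mbeta]]].
  rewrite umul_shift /= => -[/eqP Mb lam_mu].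
  have lam_neq0 : lam != 0.
    by apply: contraPneq lam_mu => ->; rewrite oppr0 mul0r => /eqP; rewrite eq_sym oner_eq0.
  have mu_neq0 : mu != 0.
    by apply: contraPneq lam_mu => ->; rewrite mulr0 => /eqP; rewrite eq_sym oner_eq0.
  split=> //; exists ((- mu)^-1 *: b).
  move: Mb; rewrite addr_eq0 -scalemxAr => /eqP->.
  by rewrite -scaleNr scalerA mulVf ?scale1r // oppr_eq0.
exists (lam^-1 *: beta, - lam^-1); rewrite umul_shift /= -scalemxAr Mbeta.
by rewrite mulrN mulNr opprK divff // scaleNr subrr.
Qed.

Lemma umul_shift_m_invertible :
  m_invertible (umul W) (0, 1) (a, - lam) <-> lam != 0 /\ M \in unitmx.
Proof.
rewrite (m_invertible_comm _ umulC).
split=> [[g fg gf] | [lam_neq0 M_unit]].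
  have lam_neq0 : lam != 0.
    apply/eqP=> lam0; move: (gf (0, 1)); rewrite umul_shift lam0 oppr0 mul0r.
    by case=> _ /eqP; rewrite eq_sym oner_eq0.
  split=> //; apply/negPn/negP.
  rewrite -unitmx_tr unitmxE unitfE negbK => /det0P [v v_neq0 vM].
  (* a left null vector of M^T is a kernel vector of M, so (v^T, 0) and 0 collide *)
  have : umul W (a, - lam) (v^T, 0) = umul W (a, - lam) (0, 0).
    by rewrite !umul_shift /= -[M]trmxK -trmx_mul vM !scale0r mulr0 mulmx0 trmx0.
  by move/(can_inj fg) => -[/eqP]; rewrite trmx_eq0; apply/negP.
exists (fun z => (invmx M *m (z.1 - (z.2 / - lam) *: a), z.2 / - lam)).
  by case=> b mu; rewrite umul_shift /= mulrC mulKf ?oppr_eq0 // addrK mulKmx.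
by case=> c nu; rewrite umul_shift /= mulKVmx // subrK mulrC divfK ?oppr_eq0.
Qed.

End EvolutionAlgebra.

Lemma spec_gen_no_unit P (F : fieldType) n (W : 'M[F]_n) a lam :
  ~ (exists e, is_unit_of (evmul W) e) ->
  spec_gen P W a lam <-> ~ P _ (umul W) (0, 1) (a, - lam).
Proof.
move=> no_unit; split=> [[[e [unit_e _]] | [_ notP]] // | notP]; last by right.
by case: no_unit; exists e.
Qed.

Theorem proposition5p3 (F : numClosedFieldType) (n : nat) (W : 'M[F]_n)
  (a : 'cV[F]_n) (lam : F) :
  (0 < n)%N -> ~ nonzero_trivial W ->
  (sigmaA_m W a lam <-> lam = 0 \/ eigenvalue (W *m diag_mx a^T) lam) /\
  (sigmaA W a lam <->
     lam = 0 \/ ~ exists beta : 'cV[F]_n,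
                    (W *m diag_mx a^T - lam%:M) *m beta = a) /\
  (sigmaA W a lam -> sigmaA_m W a lam).
Proof.
move=> n_gt0 not_trivial.
have no_unit : ~ exists e, is_unit_of (evmul W) e.
  by case=> e /(evmul_unit_nonzero_trivial n_gt0).
rewrite /sigmaA_m /sigmaA !(spec_gen_no_unit _ _ _ no_unit).
rewrite umul_shift_m_invertible umul_shift_invertible eigenvalue_unitmx.
set M := W *m diag_mx a^T - lam%:M.
have [-> | lam_neq0] := eqVneq lam 0.
  by split; [|split]; [split=> [_|_ []]; [left|] .. | move=> _ []].
have lam_neq0' : lam <> 0 by apply/eqP.
split; [|split].
- split=> [not_unit | [// | M_sing] [_ M_unit]]; last by rewrite M_unit in M_sing.
  by right; apply/negP=> M_unit; apply: not_unit.
- split=> [no_sol | [// | no_sol] [_ sol]]; last exact: no_sol.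
  by right=> sol; apply: no_sol.
- move=> no_sol [_ M_unit]; apply: no_sol; split=> //.
  by exists (invmx M *m a); rewrite mulKVmx.
Qed.
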